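(* Let $G$ be a group which is the central product of normal subgroups $H$ and $K$ (so $G=HK$, $[H,K]=1$), and let $D$ be a divisible abelian group with trivial $G$-action. For any subgroup $B$ of $G$ contained in $H'\cap K'$ (such $B$ is central), the inflation homomorphism $\inf:\operatorname{H}^2(G/B,D)\to \operatorname{H}^2(G,D)$ is surjective.
   Context: $X'$ denotes the commutator subgroup of $X$; $\operatorname{H}^2(X,D)$ is second cohomology with trivial coefficients. *)

From HB Require Import structures.
From mathcomp Require Import all_boot all_fingroup all_algebra.

Set Implicit Arguments.
Unset Strict Implicit.
Unset Printing Implicit Defensive.

Import GRing.Theory.

Section GroupNotions.
Local Open Scope group_scope.
Variable G : groupType.

(* S is a subgroup of G (subsets are Prop-valued: G may be infinite). *)
Definition is_subgroup (S : G -> Prop) : Prop :=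
  [/\ S 1, (forall x y, S x -> S y -> S (x * y)) & (forall x, S x -> S x^-1)].

Definition is_normal (N : G -> Prop) : Prop :=
  is_subgroup N /\ (forall x g, N x -> N (x ^ g)).

Inductive gen_subgroup (S : G -> Prop) : G -> Prop :=
  | gen_in x : S x -> gen_subgroup S x
  | gen_one : gen_subgroup S 1
  | gen_mul x y : gen_subgroup S x -> gen_subgroup S y -> gen_subgroup S (x * y)
  | gen_inv x : gen_subgroup S x -> gen_subgroup S x^-1.

Definition commutator_subgroup (X Y : G -> Prop) : G -> Prop :=
  gen_subgroup (fun z => exists x y, [/\ X x, Y y & z = [~ x, y]]).

Definition derived_subgroup (X : G -> Prop) : G -> Prop := commutator_subgroup X X.

Definition is_central_product (H K : G -> Prop) : Prop :=
  [/\ is_normal H, is_normal K,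
      (forall g, exists h k, [/\ H h, K k & g = h * k]) &
      (forall z, commutator_subgroup H K z -> z = 1)].

(* pi : G -> Q is a surjective homomorphism with kernel N, i.e. Q
   (together with pi) is the quotient group G/N. *)
Definition is_quotient_map (N : G -> Prop) (Q : groupType) (pi : G -> Q) : Prop :=
  [/\ (forall x y, pi (x * y) = pi x * pi y),
      (forall q, exists x, pi x = q) &
      (forall x, pi x = 1 <-> N x)].
End GroupNotions.

Section Cohomology.
Local Open Scope ring_scope.

Definition divisible (D : zmodType) : Prop :=
  forall (d : D) (n : nat), (0 < n)%N -> exists e : D, e *+ n = d.

Definition is_2cocycle (X : groupType) (D : zmodType) (f : X -> X -> D) : Prop :=
  forall x y z : X,
    f y z - f (x * y)%g z + f x (y * z)%g - f x y = 0.

Definition coboundary (X : groupType) (D : zmodType) (c : X -> D) : X -> X -> D :=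
  fun x y => c y - c (x * y)%g + c x.

Definition cohomologous (X : groupType) (D : zmodType) (f g : X -> X -> D) : Prop :=
  exists c : X -> D, forall x y, f x y - g x y = coboundary c x y.

Definition inflation (G Q : groupType) (D : zmodType) (pi : G -> Q)
  (f : Q -> Q -> D) : G -> G -> D := fun x y => f (pi x) (pi y).

(* inf : H^2(Q, D) -> H^2(G, D) is surjective: every class of H^2(G,D)
   is the inflation of a class of H^2(Q,D). *)
Definition inflation_surjective (G Q : groupType) (D : zmodType) (pi : G -> Q) : Prop :=
  forall f : G -> G -> D, is_2cocycle f ->
    exists f' : Q -> Q -> D, is_2cocycle f' /\ cohomologous f (inflation pi f').
End Cohomology.

From HB Require Import structures.
From mathcomp Require Import all_boot all_fingroup all_algebra.
From mathcomp Require Import boolp.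
From mathcomp Require classical_sets.
From mathcomp Require Import ring.

(* The commutator pairing [f x y - f y x] of a 2-cocycle is additive on
   commuting pairs, so it vanishes on [H' x K] and on [K' x H]; since [G = HK],
   every [b] in [B <= H' :&: K'] is central and [f b g = f g b].  On the abelian
   group [B], [f] is therefore a symmetric factor set, and the abelian extension
   of [B] by [D] it defines splits because divisible groups are injective
   (Baer's argument, via Zorn's lemma): [f = delta psi] on [B].  Spreading [psi]
   along the cosets of [B] yields a cochain [c] such that [f - delta c] only
   depends on the [B]-cosets of its arguments, i.e. is inflated from [G/B]. *)

Set Implicit Arguments.
Unset Strict Implicit.
Unset Printing Implicit Defensive.

Import GRing.Theory.
Local Open Scope ring_scope.

(* [ring] handles additive maps into a commutative ring; embedding a Z-module M
   into the square-zero extension int x M therefore lets [ring] decide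
   identities in M. *)
Section SquareZeroExtension.
Variable M : zmodType.

Definition sqz := (int * M)%type.
HB.instance Definition _ := GRing.Zmodule.on sqz.

Definition sqz_one : sqz := (1, 0).
Definition sqz_mul (u v : sqz) : sqz := (u.1 * v.1, u.2 *~ v.1 + v.2 *~ u.1).

Lemma sqz_mulA : associative sqz_mul.
Proof.
move=> [n a] [m b] [k c]; rewrite /sqz_mul /=; congr pair; first by rewrite mulrA.
by rewrite !mulrzDl -!mulrzA (mulrC k n) (mulrC m n) addrA.
Qed.

Lemma sqz_mulC : commutative sqz_mul.
Proof. by move=> [n a] [m b]; rewrite /sqz_mul /= mulrC addrC. Qed.

Lemma sqz_mul1 : left_id sqz_one sqz_mul.
Proof. by move=> [n a]; rewrite /sqz_mul /= mul1r mul0rz add0r. Qed.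

Lemma sqz_mulDl : left_distributive sqz_mul +%R.
Proof.
move=> [n a] [m b] [k c]; rewrite /sqz_mul /=; congr pair; first by rewrite mulrDl.
by rewrite mulrzDl mulrzDr addrACA.
Qed.

Lemma sqz_one_neq0 : sqz_one != 0. Proof. by []. Qed.

HB.instance Definition _ :=
  GRing.Zmodule_isComNzRing.Build sqz sqz_mulA sqz_mulC sqz_mul1 sqz_mulDl sqz_one_neq0.

Definition sqz_embed (a : M) : sqz := (0, a).

Lemma sqz_embedB : {morph sqz_embed : x y / x - y}.
Proof. by move=> x y; rewrite /sqz_embed; congr pair; rewrite subrr. Qed.

HB.instance Definition _ := GRing.isZmodMorphism.Build M sqz sqz_embed sqz_embedB.

Lemma sqz_embed_inj : injective sqz_embed.
Proof. by move=> x y []. Qed.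

End SquareZeroExtension.

Ltac zmodule := apply: (@sqz_embed_inj _); ring.

(* To derive [l = r] from relations [u_i = v_i], exhibit [l - r] as an integer
   combination of the [u_i - v_i]; the combination is then checked by [zmodule]. *)
Lemma eq_by_relation (M : zmodType) (l r u v : M) (k : int) :
  u = v -> l - r = (u - v) *~ k -> l = r.
Proof. by move=> ->; rewrite subrr mul0rz => /subr0_eq. Qed.

Lemma eq_by_relations2 (M : zmodType) (l r u1 v1 u2 v2 : M) (k1 k2 : int) :
  u1 = v1 -> u2 = v2 -> l - r = (u1 - v1) *~ k1 + (u2 - v2) *~ k2 -> l = r.
Proof. by move=> -> ->; rewrite !subrr !mul0rz addr0 => /subr0_eq. Qed.

Lemma eq_by_relations3 (M : zmodType) (l r u1 v1 u2 v2 u3 v3 : M) (k1 k2 k3 : int) :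
  u1 = v1 -> u2 = v2 -> u3 = v3 ->
  l - r = (u1 - v1) *~ k1 + (u2 - v2) *~ k2 + (u3 - v3) *~ k3 -> l = r.
Proof. by move=> -> -> ->; rewrite !subrr !mul0rz !addr0 => /subr0_eq. Qed.

Section DivisibleInjective.
Variables (A D : zmodType).

Definition hom_graph (Y : A * D -> Prop) :=
  [/\ Y (0, 0), (forall x d d', Y (x, d) -> Y (x, d') -> d = d') &
      forall x d y d', Y (x, d) -> Y (y, d') -> Y (x - y, d - d')].

Definition adjoin (Y : A * D -> Prop) (a : A) (e : D) (p : A * D) :=
  exists x d k, Y (x, d) /\ p = (x + a *~ k, d + e *~ k).

Section HomGraph.
Variable Y : A * D -> Prop.
Hypothesis Y_hom : hom_graph Y.

Lemma hom_graphN x d : Y (x, d) -> Y (- x, - d).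
Proof. by case: Y_hom => Y00 _ YB /(YB _ _ _ _ Y00); rewrite !sub0r. Qed.

Lemma hom_graphD x d y d' : Y (x, d) -> Y (y, d') -> Y (x + y, d + d').
Proof.
by case: Y_hom => _ _ YB Yx /hom_graphN Yy; have := YB _ _ _ _ Yx Yy; rewrite !opprK.
Qed.

Lemma hom_graphMn x d n : Y (x, d) -> Y (x *+ n, d *+ n).
Proof.
case: Y_hom => Y00 _ _ Yx; elim: n => [|n IHn]; first by rewrite !mulr0n.
by rewrite !mulrS; apply: hom_graphD.
Qed.

Lemma hom_graphMz x d k : Y (x, d) -> Y (x *~ k, d *~ k).
Proof.
move=> Yx; case: k => n; first exact: hom_graphMn.
by rewrite NegzE !mulrNz; apply/hom_graphN/hom_graphMn.
Qed.

Lemma hom_graph_at0 d : Y (0, d) -> d = 0.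
Proof. by case: Y_hom => Y00 Yfun _ /Yfun; apply. Qed.

Lemma hom_graph_adjoin a e :
  (forall k d, Y (a *~ k, d) -> d = e *~ k) -> hom_graph (adjoin Y a e).
Proof.
case: Y_hom => Y00 _ YB He; split.
- by exists 0, 0, 0; rewrite !mulr0z !addr0.
- move=> x d d' [x1 [d1 [k1 [Y1 [Ex ->]]]]] [x2 [d2 [k2 [Y2 [Ex' ->]]]]].
  have x12 : x1 - x2 = a *~ (k2 - k1).
    have -> : x1 = x - a *~ k1 by rewrite Ex addrK.
    have -> : x2 = x - a *~ k2 by rewrite Ex' addrK.
    zmodule.
  have := YB _ _ _ _ Y1 Y2; rewrite x12 => /He rel.
  by apply: (eq_by_relation (k := 1) rel); zmodule.
- move=> x d y d' [x1 [d1 [k1 [Y1 [-> ->]]]]] [x2 [d2 [k2 [Y2 [-> ->]]]]].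
  exists (x1 - x2), (d1 - d2), (k1 - k2); split; first exact: YB.
  by congr pair; zmodule.
Qed.

Hypothesis D_divisible : divisible D.

(* [e] is an [n]-th root of the value at [a *+ n], for the least [n > 0] with
   [a *+ n] in the domain of [Y]. *)
Lemma hom_graph_cyclic_value a : exists e, forall k d, Y (a *~ k, d) -> d = e *~ k.
Proof.
pose P n := `[< (0 < n)%N /\ exists d, Y (a *+ n, d) >].
have [[n Pn] | noP] := EM (exists n, P n); last first.
  exists 0 => k d; rewrite mul0rz.
  case: k => [[|n]|n]; first by rewrite mulr0z; apply: hom_graph_at0.
    by move=> Yd; case: noP; exists n.+1; apply/asboolP; split; last exists d.
  rewrite NegzE mulrNz => /hom_graphN; rewrite opprK => Yd.
  by case: noP; exists n.+1; apply/asboolP; split; last exists (- d).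
case: (ex_minnP (ex_intro P n Pn)) => {n Pn} n /asboolP[n_gt0 [dn Ydn]] n_min.
have [e Ee] := D_divisible dn n_gt0; subst dn.
exists e => k d Yd.
have [m Em] : exists m : nat, (k %% n)%Z = m.
  by exists `|(k %% n)%Z|%N; rewrite gez0_abs // modz_ge0 // eqz_nat -lt0n.
have m_lt_n : (m < n)%N by rewrite -ltz_nat -Em ltz_pmod // ltz_nat.
set q := (k %/ n)%Z.
have k_eq : k = q * n + m by rewrite -Em -divz_eq.
case: Y_hom => _ _ YB.
have := YB _ _ _ _ Yd (hom_graphMz q Ydn).
have -> : a *~ k - a *+ n *~ q = a *+ m.
  by rewrite k_eq mulrzDr (mulrC q) mulrzA -!pmulrn addrAC subrr add0r.
case: m m_lt_n Em k_eq => [_ _ k_eq | m m_lt_n _ _] Ym.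
  have /eqP := hom_graph_at0 Ym; rewrite subr_eq0 => /eqP ->.
  by rewrite k_eq addr0 (mulrC q) mulrzA -pmulrn.
have /n_min : P m.+1 by apply/asboolP; split; last exists (d - e *+ n *~ q).
by rewrite leqNgt m_lt_n.
Qed.
End HomGraph.

Lemma hom_graph_directed (U : A * D -> Prop) : U (0, 0) ->
  (forall p q, U p -> U q ->
     exists W, [/\ hom_graph W, W p, W q & forall t, W t -> U t]) ->
  hom_graph U.
Proof.
move=> U00 Udir; split => // [x d d' Ud Ud' | x d y d' Ux Uy].
  by have [W [[_ Wfun _] Wd Wd' _]] := Udir _ _ Ud Ud'; apply: Wfun Wd Wd'.
by have [W [[_ _ WB] Wx Wy WU]] := Udir _ _ Ux Uy; apply/WU/WB.
Qed.

Section Extension.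
Hypothesis D_divisible : divisible D.
Variables (S : A -> Prop) (r0 : A -> D).
Hypothesis S0 : S 0.
Hypothesis SB : forall x y, S x -> S y -> S (x - y).
Hypothesis r0B : forall x y, S x -> S y -> r0 (x - y) = r0 x - r0 y.

Definition graph_on (p : A * D) := S p.1 /\ p.2 = r0 p.1.

(* Zorn's lemma is applied to the sets whose union with [graph_on] is a
   homomorphism graph, since the empty chain has an empty union. *)
Definition extends_r0 (X : A * D -> Prop) := hom_graph (fun p => X p \/ graph_on p).

Lemma hom_graph_on : hom_graph graph_on.
Proof.
split.
- by split => //=; have := r0B S0 S0; rewrite !subrr => ->.
- by move=> x d d' [_ /= ->] [_ /= ->].
- by move=> x d y d' [Sx /= ->] [Sy /= ->]; split => /=; [exact: SB | rewrite r0B].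
Qed.

Lemma extends_r0_hom_graph W :
  hom_graph W -> (forall p, graph_on p -> W p) -> extends_r0 W.
Proof.
move=> W_hom W_r0; rewrite /extends_r0.
have -> // : (fun p => W p \/ graph_on p) = W.
by apply/funext => p; apply/propext; split=> [[//|/W_r0]|]; last left.
Qed.

Lemma extends_r0_chain (F : (A * D -> Prop) -> Prop) :
  (forall X, F X -> extends_r0 X) ->
  classical_sets.total_on F classical_sets.subset ->
  extends_r0 (classical_sets.bigcup F id).
Proof.
move=> F_ext F_chain.
have W_sub X : F X ->
    forall t, X t \/ graph_on t -> classical_sets.bigcup F id t \/ graph_on t.
  by move=> FX t [Xt|Gt]; [left; exists X | right].
apply: hom_graph_directed => [|p q]; first by right; case: hom_graph_on.
case=> [[X FX Xp]|Gp] [[X' FX' X'q]|Gq].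
- have [XX'|X'X] := F_chain _ _ FX FX'.
    exists (fun t => X' t \/ graph_on t).
    by split; [exact: F_ext | left; exact: XX' | left | exact: W_sub].
  exists (fun t => X t \/ graph_on t).
  by split; [exact: F_ext | left | left; exact: X'X | exact: W_sub].
- exists (fun t => X t \/ graph_on t).
  by split; [exact: F_ext | left | right | exact: W_sub].
- exists (fun t => X' t \/ graph_on t).
  by split; [exact: F_ext | right | left | exact: W_sub].
- by exists graph_on; split => //; [exact: hom_graph_on | right].
Qed.

Theorem divisible_hom_ext : exists r : {additive A -> D}, forall x, S x -> r x = r0 x.
Proof.
have [X [X_ext X_max]] := classical_sets.Zorn_bigcup extends_r0_chain.
pose Y p := X p \/ graph_on p.
have Y_total a : exists d, Y (a, d).
  have [e He] := hom_graph_cyclic_value X_ext D_divisible a.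
  have Y_adjoin t : Y t -> adjoin Y a e t.
    by case: t => x d Yt; exists x, d, 0; rewrite !mulr0z !addr0.
  have adjoin_X : forall t, adjoin Y a e t -> X t.
    have [//|not_sub] := EM (forall t, adjoin Y a e t -> X t).
    exfalso; apply: (X_max (adjoin Y a e)); first by split => // t Xt; apply/Y_adjoin; left.
    apply: extends_r0_hom_graph => [|p Gp]; first exact: hom_graph_adjoin.
    by apply: Y_adjoin; right.
  by exists e; left; apply: adjoin_X; exists 0, 0, 1; rewrite !add0r; split; first by case: X_ext.
pose r a := projT1 (cid (Y_total a)).
have rY a : Y (a, r a) by rewrite /r; case: cid.
case: X_ext => _ Yfun YB.
have rB : zmod_morphism r by move=> x y; apply: Yfun (rY _) (YB _ _ _ _ (rY x) (rY y)).
pose r_additive : {additive A -> D} := HB.pack r (GRing.isZmodMorphism.Build _ _ r rB).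
exists r_additive => x Sx /=.
by apply: Yfun (rY _) _; right.
Qed.
End Extension.
End DivisibleInjective.

Section AbelianExtension.
Variables (G : groupType) (D : zmodType) (B : G -> Prop) (f : G -> G -> D).
Hypothesis B_subgroup : is_subgroup B.
Hypothesis B_abelian : forall x y, B x -> B y -> commute x y.
Hypothesis f_cocycle : forall x y z, B x -> B y -> B z ->
  f y z - f (x * y)%g z + f x (y * z)%g - f x y = 0.
Hypothesis f_sym : forall x y, B x -> B y -> f x y = f y x.
Hypothesis f_norm : forall x, B x -> f 1%g x = 0.

(* The abelian extension of [B] by [D] with factor set [f]; it splits because
   [D] is injective, which makes [f] a coboundary on [B]. *)
Definition ext := {p : D * G | `[< B p.2 >]}.
HB.instance Definition _ := Choice.on ext.

Definition ext_pair (d : D) (x : G) (Bx : B x) : ext := exist _ (d, x) (asboolT Bx).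

Lemma ext_mem (u : ext) : B (val u).2.
Proof. exact: asboolW (valP u). Qed.

Let B1 : B 1%g. Proof. by case: B_subgroup. Qed.
Let BM x y : B x -> B y -> B (x * y)%g. Proof. by case: B_subgroup => _ + _; apply. Qed.
Let BV x : B x -> B x^-1%g. Proof. by case: B_subgroup => _ _; apply. Qed.

Definition ext_zero : ext := ext_pair 0 B1.
Definition ext_add (u v : ext) : ext :=
  ext_pair ((val u).1 + (val v).1 + f (val u).2 (val v).2) (BM (ext_mem u) (ext_mem v)).
Definition ext_opp (u : ext) : ext :=
  ext_pair (- (val u).1 - f (val u).2 (val u).2^-1%g) (BV (ext_mem u)).

Lemma ext_addA : associative ext_add.
Proof.
move=> [[a x] Bx] [[b y] By] [[c z] Bz]; apply: val_inj => /=.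
congr pair; last by rewrite mulgA.
have rel := f_cocycle (asboolW Bx) (asboolW By) (asboolW Bz).
by apply: (eq_by_relation (k := 1) rel) => /=; zmodule.
Qed.

Lemma ext_addC : commutative ext_add.
Proof.
move=> u v; apply: val_inj => /=; congr pair; last exact: B_abelian (ext_mem u) (ext_mem v).
by rewrite (addrC (val u).1) (f_sym (ext_mem u) (ext_mem v)).
Qed.

Lemma ext_add0 : left_id ext_zero ext_add.
Proof.
by move=> u; apply: val_inj; rewrite /= add0r (f_norm (ext_mem u)) addr0 mul1g; case: (val u).
Qed.

Lemma ext_addN : left_inverse ext_zero ext_opp ext_add.
Proof.
move=> u; apply: val_inj => /=.
by rewrite mulVg (f_sym (BV (ext_mem u)) (ext_mem u)) addrAC subrK addNr.
Qed.

HB.instance Definition _ := GRing.isZmodule.Build ext ext_addA ext_addC ext_add0 ext_addN.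

Lemma sym_cocycle_coboundary : divisible D ->
  exists psi : G -> D, forall b b', B b -> B b' -> f b b' = coboundary psi b b'.
Proof.
move=> D_divisible.
pose S (u : ext) := (val u).2 = 1%g.
have S0 : S 0 by [].
have SB u v : S u -> S v -> S (u - v) by rewrite /S /= => -> ->; rewrite invg1 mulg1.
have r0B u v : S u -> S v -> (val (u - v)).1 = (val u).1 - (val v).1.
  by rewrite /S /= => -> ->; rewrite invg1 !f_norm // subr0 addr0.
have [r rS] := divisible_hom_ext D_divisible S0 SB r0B.
pose psi x := if pselect (B x) is left Bx then r (ext_pair 0 Bx) else 0.
have psiE x (Bx : B x) : psi x = r (ext_pair 0 Bx).
  by rewrite /psi; case: pselect => // Bx'; rewrite (Prop_irrelevance Bx' Bx).
exists psi => b b' Bb Bb'.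
rewrite /coboundary (psiE _ Bb) (psiE _ Bb') (psiE _ (BM Bb Bb')).
have sum_eq : ext_pair 0 Bb + ext_pair 0 Bb' = ext_pair (f b b') B1 + ext_pair 0 (BM Bb Bb').
  by apply: val_inj => /=; rewrite (f_norm (BM Bb Bb')) mul1g !addr0 add0r.
have := congr1 r sum_eq; rewrite !raddfD (rS (ext_pair _ B1)) //= => rel.
by apply: (eq_by_relation (k := -1) rel); zmodule.
Qed.
End AbelianExtension.

Section Subgroups.
Variable G : groupType.

Lemma gen_subgroup_sub (S P : G -> Prop) : is_subgroup P ->
  (forall x, S x -> P x) -> forall z, gen_subgroup S z -> P z.
Proof. by case=> P1 PM PV SP z; elim => *; auto. Qed.

Lemma centralizer_subgroup (y : G) : is_subgroup (fun z => commute z y).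
Proof.
split; first exact/commute_sym/commute1.
  by move=> x z cx cz; apply/commute_sym/commuteM; apply: commute_sym.
by move=> x cx; apply/commute_sym/commuteV/commute_sym.
Qed.

Lemma derived_subgroup_sub (X : G -> Prop) :
  is_subgroup X -> forall z, derived_subgroup X z -> X z.
Proof.
move=> X_sub; apply: gen_subgroup_sub => // _ [x [w [Xx Xw ->]]].
case: X_sub => _ XM XV; rewrite /commg /conjg.
exact: XM (XV _ Xx) (XM _ _ (XV _ Xw) (XM _ _ Xx Xw)).
Qed.

End Subgroups.

Section Cocycles.
Variables (G : groupType) (D : zmodType) (f : G -> G -> D).
Hypothesis f_cocycle : is_2cocycle f.

Lemma cocycle1l x : f 1%g x = f 1%g 1%g.
Proof. by have := f_cocycle 1%g 1%g x; rewrite !mul1g subrr add0r => /subr0_eq. Qed.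

Lemma cocycle1r x : f x 1%g = f 1%g 1%g.
Proof. by have := f_cocycle x 1%g 1%g; rewrite !mulg1 subrK => /subr0_eq. Qed.

Lemma cocycleB_coboundary (c : G -> D) :
  is_2cocycle (fun x y => f x y - coboundary c x y).
Proof.
move=> x y z; rewrite /coboundary mulgA.
by apply: (eq_by_relation (k := 1) (f_cocycle x y z)); zmodule.
Qed.

(* The commutator pairing of the central extension defined by [f]. *)
Definition comm_pairing x y := f x y - f y x.

Lemma comm_pairingC x y : comm_pairing y x = - comm_pairing x y.
Proof. by rewrite /comm_pairing opprB. Qed.

Lemma comm_pairing1l y : comm_pairing 1%g y = 0.
Proof. by rewrite /comm_pairing cocycle1l cocycle1r subrr. Qed.

Lemma comm_pairingMl x1 x2 y : commute x1 y -> commute x2 y ->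
  comm_pairing (x1 * x2)%g y = comm_pairing x1 y + comm_pairing x2 y.
Proof.
move=> c1 c2.
have e1 := f_cocycle x1 x2 y; have e2 := f_cocycle x1 y x2; have e3 := f_cocycle y x1 x2.
rewrite c2 in e1; rewrite c1 in e2.
apply: (eq_by_relations3 (k1 := -1) (k2 := 1) (k3 := -1) e1 e2 e3).
by rewrite /comm_pairing; zmodule.
Qed.

Lemma comm_pairingVl x y : commute x y -> comm_pairing x^-1%g y = - comm_pairing x y.
Proof.
move=> cxy; have cVy : commute x^-1%g y by apply/commute_sym/commuteV/commute_sym.
by apply/eqP; rewrite -addr_eq0 -comm_pairingMl // mulVg comm_pairing1l.
Qed.

Lemma comm_pairing_kernel_subgroup y :
  is_subgroup (fun z => commute z y /\ comm_pairing z y = 0).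
Proof.
have [C1 CM CV] := centralizer_subgroup y.
split; first by split; [exact: C1 | exact: comm_pairing1l].
  by move=> x w [cx px] [cw pw]; split; [exact: CM | rewrite comm_pairingMl // px pw addr0].
by move=> x [cx px]; split; [exact: CV | rewrite comm_pairingVl // px oppr0].
Qed.

Lemma comm_pairing_commg x w y : commute x y -> commute w y ->
  commute [~ x, w] y /\ comm_pairing [~ x, w] y = 0.
Proof.
move=> cx cw; have [_ CM CV] := centralizer_subgroup y.
have cVx := CV _ cx; have cVw := CV _ cw; have cxw := CM _ _ cx cw.
have cwxw := CM _ _ cVw cxw.
rewrite /commg /conjg; split; first exact: CM.
by rewrite !comm_pairingMl ?comm_pairingVl //; zmodule.
Qed.

Lemma comm_pairing_derived (X : G -> Prop) y : (forall x, X x -> commute x y) ->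
  forall z, derived_subgroup X z -> comm_pairing z y = 0.
Proof.
move=> cXy z /(gen_subgroup_sub (comm_pairing_kernel_subgroup y)) -[] // _ [x [w [Xx Xw ->]]].
exact: comm_pairing_commg (cXy _ Xx) (cXy _ Xw).
Qed.

End Cocycles.

Section CentralProduct.
Variables (G : groupType) (H K : G -> Prop).
Hypothesis HK : is_central_product H K.

Lemma central_product_commute h k : H h -> K k -> commute h k.
Proof.
case: HK => _ _ _ HK1 Hh Kk; apply/commgP/eqP; apply: HK1.
by apply: gen_in; exists h, k.
Qed.

Lemma central_product_derived_central b :
  derived_subgroup H b -> derived_subgroup K b -> forall g, commute b g.
Proof.
case: HK => [[H_sub _] [K_sub _] HKG _] /(derived_subgroup_sub H_sub) Hb
  /(derived_subgroup_sub K_sub) Kb g.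
have [h [k [Hh Kk ->]]] := HKG g.
by apply: commuteM; [apply/commute_sym/central_product_commute | apply: central_product_commute].
Qed.

Lemma central_product_cocycle_sym (D : zmodType) (f : G -> G -> D) b g :
  is_2cocycle f -> derived_subgroup H b -> derived_subgroup K b -> f b g = f g b.
Proof.
move=> f_cocycle H'b K'b; apply/subr0_eq; rewrite -/(comm_pairing f b g).
case: HK => _ _ HKG _; have [h [k [Hh Kk ->]]] := HKG g.
have b_central := central_product_derived_central H'b K'b.
have chb : commute h b by apply/commute_sym/b_central.
have ckb : commute k b by apply/commute_sym/b_central.
rewrite comm_pairingC comm_pairingMl // (comm_pairingC f b h) (comm_pairingC f b k).
rewrite (comm_pairing_derived f_cocycle _ K'b) => [|x Kx]; last first.
  exact/commute_sym/central_product_commute.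
rewrite (comm_pairing_derived f_cocycle _ H'b) => [|x Hx]; last first.
  exact: central_product_commute.
by rewrite !oppr0 addr0 oppr0.
Qed.

End CentralProduct.

Section Inflation.
Variables (G Q : groupType) (D : zmodType) (N : G -> Prop) (pi : G -> Q).
Hypothesis pi_quotient : is_quotient_map N pi.

Lemma quotient_map1 : pi 1%g = 1%g.
Proof. by case: pi_quotient => piM _ _; apply: (mulgI (pi 1%g)); rewrite -piM !mulg1. Qed.

Lemma quotient_map_eq x y : pi x = pi y -> N (x^-1 * y)%g.
Proof.
case: pi_quotient => piM _ piN E.
by apply/piN; rewrite piM -E -piM mulVg quotient_map1.
Qed.

Lemma quotient_section : exists s : Q -> G, s 1%g = 1%g /\ forall q, pi (s q) = q.
Proof.
case: pi_quotient => _ piS _.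
exists (fun q => if q == 1%g then 1%g else projT1 (cid (piS q))); split => [|q].
  by rewrite eqxx.
by case: eqP => [->|_]; [exact: quotient_map1 | case: cid].
Qed.

Lemma inflation_of_pi_invariant (h : G -> G -> D) : is_2cocycle h ->
  (forall x x' y y', pi x = pi x' -> pi y = pi y' -> h x y = h x' y') ->
  exists f : Q -> Q -> D, is_2cocycle f /\ forall x y, h x y = inflation pi f x y.
Proof.
case: pi_quotient => piM _ _ h_cocycle h_inv; have [s [_ spi]] := quotient_section.
exists (fun q r => h (s q) (s r)); split => [q1 q2 q3 | x y].
  rewrite (h_inv (s (q1 * q2)%g) (s q1 * s q2)%g (s q3) (s q3)) ?piM ?spi //.
  by rewrite (h_inv (s q1) (s q1) (s (q2 * q3)%g) (s q2 * s q3)%g) ?piM ?spi.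
by rewrite /inflation; apply: h_inv.
Qed.

End Inflation.

Section TwistedCochain.
Variables (G Q : groupType) (D : zmodType) (N : G -> Prop) (pi : G -> Q).
Hypothesis pi_quotient : is_quotient_map N pi.
Variable f : G -> G -> D.
Hypothesis f_cocycle : is_2cocycle f.

Lemma twisted_cochain (psi : G -> D) : f 1%g 1%g = 0 ->
  (forall b b', N b -> N b' -> f b b' = coboundary psi b b') ->
  exists c : G -> D, forall y b, N b -> c (y * b)%g = c y + c b - f y b.
Proof.
move=> f_norm psiP; have [s [s1 spi]] := quotient_section pi_quotient.
have [piM _ piN] := pi_quotient.
pose rep x := s (pi x); pose off x := ((rep x)^-1 * x)%g.
have off_N x : N (off x) by apply: (quotient_map_eq pi_quotient); rewrite /rep spi.
(* On the coset [s q * N], [c (s q * b) = psi b - f (s q) b]. *)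
pose c x := psi (off x) - f (rep x) (off x).
have cN b : N b -> c b = psi b.
  move=> /piN pib; rewrite /c /off /rep pib s1 invg1 mul1g.
  by rewrite cocycle1l // f_norm subr0.
exists c => y b Nb; have pib : pi b = 1%g by apply/piN.
have rep_yb : rep (y * b)%g = rep y by rewrite /rep piM pib mulg1.
have off_yb : off (y * b)%g = (off y * b)%g by rewrite /off rep_yb mulgA.
rewrite (cN _ Nb) /c rep_yb off_yb.
have ep := psiP _ _ (off_N y) Nb; have ec := f_cocycle (rep y) (off y) b.
rewrite /coboundary in ep; rewrite mulKVg in ec.
by apply: (eq_by_relations2 (k1 := 1) (k2 := -1) ep ec); zmodule.
Qed.

Lemma twisted_coboundary_pi_invariant (c : G -> D) :
  (forall b g, N b -> commute b g) -> (forall b g, N b -> f b g = f g b) ->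
  (forall y b, N b -> c (y * b)%g = c y + c b - f y b) ->
  forall x x' y y', pi x = pi x' -> pi y = pi y' ->
  f x y - coboundary c x y = f x' y' - coboundary c x' y'.
Proof.
move=> N_central f_sym cP.
pose h x y := f x y - coboundary c x y.
have hR u v b : N b -> h u (v * b)%g = h u v.
  move=> Nb; rewrite /h /coboundary mulgA (cP v b Nb) (cP (u * v)%g b Nb).
  by apply: (eq_by_relation (k := 1) (f_cocycle u v b)); zmodule.
have hL u v b : N b -> h (u * b)%g v = h u v.
  move=> Nb; rewrite /h /coboundary -mulgA (N_central b v Nb) mulgA.
  rewrite (cP u b Nb) (cP (u * v)%g b Nb).
  have e1 := f_cocycle u b v; rewrite (N_central b v Nb) (f_sym b v Nb) in e1.
  by apply: (eq_by_relations2 (k1 := -1) (k2 := 1) e1 (f_cocycle u v b)); zmodule.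
move=> x x' y y' /(quotient_map_eq pi_quotient) Nx /(quotient_map_eq pi_quotient) Ny.
change (h x y = h x' y'); by rewrite -[x'](mulKVg x) -[y'](mulKVg y) hL ?hR.
Qed.

End TwistedCochain.

Theorem theorem3p1 (G : groupType) (H K B : G -> Prop) (D : zmodType)
  (Q : groupType) (pi : G -> Q) :
  is_central_product H K ->
  divisible D ->
  is_subgroup B ->
  (forall b, B b -> derived_subgroup H b /\ derived_subgroup K b) ->
  is_quotient_map B pi ->
  inflation_surjective D pi.
Proof.
move=> HK D_divisible B_subgroup B_derived pi_quotient f f_cocycle.
pose f0 x y := f x y - coboundary (fun=> f 1%g 1%g) x y.
have f0_cocycle : is_2cocycle f0 by apply: cocycleB_coboundary.
have f0_norm : f0 1%g 1%g = 0 by rewrite /f0 /coboundary subrr add0r subrr.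
have B_central b g : B b -> commute b g.
  by case/B_derived => H'b K'b; apply: central_product_derived_central H'b K'b g.
have f0_sym b g : B b -> f0 b g = f0 g b.
  by case/B_derived => H'b K'b; apply: central_product_cocycle_sym H'b K'b.
have [psi psiP] : exists psi, forall b b', B b -> B b' -> f0 b b' = coboundary psi b b'.
  apply: sym_cocycle_coboundary => // [x y Bx _ | x y Bx _ | x _].
  - exact: B_central.
  - exact: f0_sym.
  - by rewrite cocycle1l.
have [c cP] := twisted_cochain pi_quotient f0_cocycle f0_norm psiP.
have h_inv := twisted_coboundary_pi_invariant pi_quotient f0_cocycle B_central f0_sym cP.
have [f' [f'_cocycle f'E]] :=
  inflation_of_pi_invariant pi_quotient (cocycleB_coboundary f0_cocycle c) h_inv.
exists f'; split => //; exists (fun x => c x + f 1%g 1%g) => x y.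
by rewrite -f'E /f0 /coboundary; zmodule.
Qed.
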